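(* Let $G=(V,E)$ be a directed acyclic graph with real edge weights, let $s_1,t_1,s_2,t_2\in V$, let $E_\cap=E(s_1,t_1)\cap E(s_2,t_2)$, and let $\mathcal{B}$ be the set of vertex sets of the connected components of the undirected graph obtained from $(V,E_\cap)$ by ignoring edge directions. Let $i\in\{1,2\}$, let $P$ be a shortest path from $s_i$ to $t_i$, and let $x,y\in B$ for some $B\in\mathcal{B}$ with $x$ preceding $y$ on $P$. Then the subpath $P[x,y]$ lies in the induced subgraph of $(V,E_\cap)$ on $B$, i.e. all its vertices lie in $B$ and all its edges lie in $E_\cap$.
   Context: $E(x,y)$ is the set of edges lying on at least one shortest (minimum weight) path from $x$ to $y$. For a path $P$, $x$ precedes $y$ if $x=y$ or $x$ appears before $y$; $P[x,y]$ is the subpath from $x$ to $y$. *)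

From HB Require Import structures.
From mathcomp Require Import all_boot all_order all_algebra.
Set Implicit Arguments. Unset Strict Implicit. Unset Printing Implicit Defensive.
Import Order.TTheory GRing.Theory Num.Theory.
Local Open Scope ring_scope.

Section Graphs.
Variables (V : finType) (R : realFieldType).
Variable (e : rel V).
Variable (w : V -> V -> R).

(* A (directed) path is given by its full vertex sequence P = [:: s; ...; t]. *)
Definition is_path (s t : V) (P : seq V) : Prop :=
  exists p, P = s :: p /\ path e s p /\ last s p = t.

Definition pedges (P : seq V) : seq (V * V) := zip P (behead P).

Definition pweight (P : seq V) : R := \sum_(uv <- pedges P) w uv.1 uv.2.

Definition acyclic : Prop :=
  forall v p, path e v p -> last v p = v -> p = [::].

Definition shortest_path (s t : V) (P : seq V) : Prop :=
  is_path s t P /\ forall Q, is_path s t Q -> pweight P <= pweight Q.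

Definition Eset (s t : V) (uv : V * V) : Prop :=
  exists P, shortest_path s t P /\ uv \in pedges P.

Definition Ecap (s1 t1 s2 t2 : V) (uv : V * V) : Prop :=
  Eset s1 t1 uv /\ Eset s2 t2 uv.

(* connectivity in the undirected graph (V, F) underlying an edge set F *)
Inductive uconn (F : V * V -> Prop) (x : V) : V -> Prop :=
| uconn_refl : uconn F x x
| uconn_fwd y z : uconn F x y -> F (y, z) -> uconn F x z
| uconn_bwd y z : uconn F x y -> F (z, y) -> uconn F x z.

Definition is_component (F : V * V -> Prop) (B : V -> Prop) : Prop :=
  exists v, forall u, B u <-> uconn F v u.

End Graphs.

(* Let d_s(v) be the weight of the prefix ending at v of any shortest s-t path
   through v; it does not depend on the path, and an edge (u,v) of E(s,t)
   satisfies d_s(v) = d_s(u) + w(u,v).  Hence along the undirected edges of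
   E_cap both potentials d_s1 and d_s2 change by the same amount, so inside a
   component B the differences d_s1(y) - d_s1(x) and d_s2(y) - d_s2(x) agree.
   If x precedes y on a shortest s1-t1 path P, then P[x,y] weighs
   d_s1(y) - d_s1(x) = d_s2(y) - d_s2(x), so replacing the x-y part of a
   shortest s2-t2 path through x by P[x,y] and continuing along a shortest
   s2-t2 path through y yields again a shortest s2-t2 path.  Thus every edge
   of P[x,y] lies in E_cap, and its vertices lie in B by connectivity.
   Acyclicity only serves to exclude x = y at distinct positions of P. *)
From HB Require Import structures.
From mathcomp Require Import all_boot all_order all_algebra.
From mathcomp Require Import zify lra.
Set Implicit Arguments. Unset Strict Implicit. Unset Printing Implicit Defensive.
Import Order.TTheory GRing.Theory Num.Theory.
Local Open Scope ring_scope.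

Lemma nth_split2 (T : Type) (x0 : T) (P : seq T) (i j : nat) :
  (i < j)%N -> (j < size P)%N ->
  exists A M C, [/\ P = A ++ nth x0 P i :: M ++ nth x0 P j :: C,
                    size A = i & size M = (j - i.+1)%N].
Proof.
move=> lt_ij lt_jP; exists (take i P), (take (j - i.+1) (drop i.+1 P)), (drop j.+1 P).
split; last first.
- by rewrite size_takel // size_drop; lia.
- by rewrite size_takel //; lia.
have -> : nth x0 P j = nth x0 (drop i.+1 P) (j - i.+1) by rewrite nth_drop; congr nth; lia.
have -> : drop j.+1 P = drop (j - i.+1).+1 (drop i.+1 P) by rewrite drop_drop; congr drop; lia.
rewrite -drop_nth ?cat_take_drop ?size_drop; last lia.
by rewrite -drop_nth ?cat_take_drop //; lia.
Qed.

Section Paths.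
Variables (V : finType) (R : realFieldType) (e : rel V) (w : V -> V -> R).

Lemma is_path_cons (s t a : V) (q : seq V) :
  is_path e s t (a :: q) <-> [/\ a = s, path e a q & last a q = t].
Proof.
split; first by move=> [p [[-> ->] [? ?]]].
by move=> [-> ? ?]; exists q.
Qed.

Lemma is_path_cat (s t v : V) (A Bs : seq V) :
  is_path e s t (A ++ v :: Bs) <-> is_path e s v (rcons A v) /\ is_path e v t (v :: Bs).
Proof.
case: A => [|a A] /=; rewrite !is_path_cons /=.
  by split=> [[-> ? ?] | [[-> _ _] [_ ? ?]]].
rewrite cat_path rcons_path last_cat last_rcons /=.
by split=> [[-> /and3P [-> -> ->] ?] | [[-> /andP [-> ->] _] [_ -> ?]]].
Qed.

Lemma pweight_cons2 (a b : V) (l : seq V) :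
  pweight w [:: a, b & l] = w a b + pweight w (b :: l).
Proof. by rewrite /pweight big_cons. Qed.

Lemma pweight1 (a : V) : pweight w [:: a] = 0.
Proof. by rewrite /pweight big_nil. Qed.

Lemma pweight_cat (v : V) (A Bs : seq V) :
  pweight w (A ++ v :: Bs) = pweight w (rcons A v) + pweight w (v :: Bs).
Proof.
case: A => [|a A] /=; first by rewrite pweight1 add0r.
elim: A a => [|b A IH] a /=; first by rewrite !pweight_cons2 pweight1 addr0.
by rewrite !pweight_cons2 IH addrA.
Qed.

Lemma pedges_split (u v : V) (Q : seq V) :
  (u, v) \in pedges Q -> exists A Bs, Q = A ++ [:: u, v & Bs].
Proof.
elim: Q => [|a [|b Q] IH] //.
rewrite [pedges _]/= in_cons => /orP [/eqP [-> ->] | /IH [A [Bs ->]]].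
  by exists [::], Q.
by exists (a :: A), Bs.
Qed.

Lemma pedges_catl (X Y : seq V) : {subset pedges X <= pedges (X ++ Y)}.
Proof.
elim: X => [|a [|b X] IH] //= uv.
by rewrite !in_cons => /orP [-> // | /IH ->]; rewrite orbT.
Qed.

Lemma pedges_catr (X Y : seq V) : {subset pedges Y <= pedges (X ++ Y)}.
Proof.
elim: X => [|a X IH] //= uv /IH.
by case: (X ++ Y) => [|b Z] // uvZ; rewrite [pedges _]/= in_cons uvZ orbT.
Qed.

Lemma pedges_segment (x y : V) (A M C : seq V) :
  {subset pedges (x :: rcons M y) <= pedges (A ++ x :: M ++ y :: C)}.
Proof. by move=> uv /(pedges_catl C); rewrite cat_cons cat_rcons => /pedges_catr. Qed.

Lemma pedges_nth (x0 : V) (S : seq V) (k : nat) :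
  (k.+1 < size S)%N -> (nth x0 S k, nth x0 S k.+1) \in pedges S.
Proof.
elim: S k => [|a [|b S] IH] [|k] //= lt_kS; first by rewrite in_cons eqxx.
by rewrite in_cons IH ?orbT.
Qed.

Lemma component_path_closed (F : V * V -> Prop) (B : V -> Prop) (x : V) (p : seq V) :
  is_component F B -> B x -> (forall uv, uv \in pedges (x :: p) -> F uv) ->
  forall v, v \in x :: p -> B v.
Proof.
move=> [r memB]; elim: p x => [|y p IH] x Bx Fp v; first by rewrite inE => /eqP ->.
rewrite in_cons => /orP [/eqP -> // | ]; apply: IH => [|uv uv_p].
  by apply/memB/(uconn_fwd (y := x)); [apply/memB | apply: Fp; rewrite in_cons eqxx].
by apply: Fp; rewrite [pedges _]/= in_cons uv_p orbT.
Qed.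

Lemma shortest_path_weight_eq (s t : V) (P Q : seq V) :
  shortest_path e w s t P -> shortest_path e w s t Q -> pweight w P = pweight w Q.
Proof. by move=> [pP minP] [pQ minQ]; apply/le_anti; rewrite minP // minQ. Qed.

Definition on_shortest (s t v : V) (a : R) : Prop :=
  exists A Bs, shortest_path e w s t (A ++ v :: Bs) /\ pweight w (rcons A v) = a.

Lemma on_shortest_uniq (s t v : V) (a b : R) :
  on_shortest s t v a -> on_shortest s t v b -> a = b.
Proof.
move=> [A [Bs [sP <-]]] [A' [Bs' [sQ <-]]].
have eqPQ := shortest_path_weight_eq sP sQ.
move: (sP) (sQ) => [/is_path_cat [pA pBs] minP] [/is_path_cat [pA' pBs'] minQ].
have := minP _ (proj2 (is_path_cat _ _ _ _ _) (conj pA' pBs)).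
have := minQ _ (proj2 (is_path_cat _ _ _ _ _) (conj pA pBs')).
rewrite !pweight_cat in eqPQ *; lra.
Qed.

Lemma Eset_on_shortest (s t u v : V) :
  Eset e w s t (u, v) -> exists a, on_shortest s t u a /\ on_shortest s t v (a + w u v).
Proof.
move=> [Q [sQ /pedges_split [A [Bs eqQ]]]]; subst Q.
exists (pweight w (rcons A u)); split; first by exists A, (v :: Bs).
exists (rcons A u), Bs; rewrite cat_rcons; split=> //.
by rewrite -cats1 cat_rcons pweight_cat pweight_cons2 pweight1 addr0.
Qed.

Lemma shortest_splice (s t x y : V) (A2 B2 A3 B3 M : seq V) :
  shortest_path e w s t (A2 ++ x :: B2) -> shortest_path e w s t (A3 ++ y :: B3) ->
  is_path e x y (rcons (x :: M) y) ->
  pweight w (rcons A2 x) + pweight w (rcons (x :: M) y) = pweight w (rcons A3 y) ->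
  shortest_path e w s t (A2 ++ x :: M ++ y :: B3).
Proof.
move=> [/is_path_cat [pA2 _] _] [/is_path_cat [_ pB3] minQ3] pS wS.
have split_xy : x :: M ++ y :: B3 = (x :: M) ++ y :: B3 by [].
split; first by apply/is_path_cat; split=> //; rewrite split_xy; apply/is_path_cat.
move=> Q pQ; apply: le_trans (minQ3 _ pQ).
by rewrite !pweight_cat split_xy pweight_cat addrA wS.
Qed.

Definition same_offset (sa ta sb tb x y : V) : Prop :=
  exists xa xb ya yb, [/\ on_shortest sa ta x xa, on_shortest sb tb x xb,
    on_shortest sa ta y ya, on_shortest sb tb y yb & ya - xa = yb - xb].

Section SameOffset.
Variables (sa ta sb tb : V).
Notation same_offset := (same_offset sa ta sb tb).

Lemma same_offset_sym (x y : V) : same_offset x y -> same_offset y x.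
Proof.
by move=> [xa [xb [ya [yb [? ? ? ? eq_d]]]]]; exists ya, yb, xa, xb; split=> //; lra.
Qed.

Lemma same_offset_trans (x y z : V) :
  same_offset x y -> same_offset y z -> same_offset x z.
Proof.
move=> [xa [xb [ya [yb [? ? ya1 yb1 eq_xy]]]]] [ya' [yb' [za [zb [ya2 yb2 ? ? eq_yz]]]]].
have ea := on_shortest_uniq ya1 ya2; have eb := on_shortest_uniq yb1 yb2.
by exists xa, xb, za, zb; split=> //; lra.
Qed.

Lemma same_offset_edge (u v : V) :
  Eset e w sa ta (u, v) -> Eset e w sb tb (u, v) -> same_offset u v.
Proof.
move=> /Eset_on_shortest [a [? ?]] /Eset_on_shortest [b [? ?]].
by exists a, b, (a + w u v), (b + w u v); split=> //; lra.
Qed.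

Variable F : V * V -> Prop.
Hypothesis F_Eset : forall uv, F uv <-> Eset e w sa ta uv /\ Eset e w sb tb uv.

Lemma uconn_same_offset (r z : V) : uconn F r z -> z = r \/ same_offset r z.
Proof.
have edge u v : F (u, v) -> same_offset u v by move=> /F_Eset [? ?]; exact: same_offset_edge.
elim=> [|y {}z _ IH /edge yz|y {}z _ IH /edge/same_offset_sym yz]; [by left | right..].
all: by case: IH => [<- // | /same_offset_trans]; apply.
Qed.

Lemma component_same_offset (B : V -> Prop) (x y : V) :
  is_component F B -> B x -> B y -> x <> y -> same_offset x y.
Proof.
move=> [r memB] /memB/uconn_same_offset [-> | rx] /memB/uconn_same_offset [ry | ry] neq_xy.
- by case: neq_xy; rewrite ry.
- exact: ry.
- by rewrite ry; apply: same_offset_sym.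
- exact: same_offset_trans (same_offset_sym rx) ry.
Qed.

Lemma shortest_segment_in_F (B : V -> Prop) (x y : V) (A M C : seq V) :
  acyclic e -> shortest_path e w sa ta (A ++ x :: M ++ y :: C) ->
  is_component F B -> B x -> B y ->
  forall uv, uv \in pedges (x :: rcons M y) -> F uv.
Proof.
move=> acyc sP compB Bx By uv uv_S.
have [_ /(is_path_cat _ _ _ (x :: M)) [pS _]] := iffLR (is_path_cat _ _ _ _ _) (proj1 sP).
have neq_xy : x <> y.
  move: pS => /is_path_cons [_ pS lastS] eq_xy.
  by move: (acyc x _ pS); rewrite lastS eq_xy => /(_ erefl)/(congr1 size); rewrite size_rcons.
have [xa [xb [ya [yb [xa1 [A2 [B2 [sQ2 <-]]] ya1 [A3 [B3 [sQ3 <-]]] eq_d]]]]] :=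
  component_same_offset compB Bx By neq_xy.
have xa2 : on_shortest sa ta x (pweight w (rcons A x)) by exists A, (M ++ y :: C).
have ya2 : on_shortest sa ta y (pweight w (rcons A x) + pweight w (rcons (x :: M) y)).
  exists (A ++ x :: M), C; rewrite -catA rcons_cat pweight_cat; split=> //.
have sQ := shortest_splice sQ2 sQ3 pS.
rewrite (on_shortest_uniq xa1 xa2) (on_shortest_uniq ya1 ya2) in eq_d.
apply/F_Eset; split.
- by exists (A ++ x :: M ++ y :: C); split=> //; apply: pedges_segment.
- exists (A2 ++ x :: M ++ y :: B3); split; first by apply: sQ; lra.
  exact: pedges_segment.
Qed.

End SameOffset.
End Paths.

Theorem lemma19 (V : finType) (R : realFieldType) (e : rel V) (w : V -> V -> R)
  (s1 t1 s2 t2 : V) (B : V -> Prop) (s t : V) (P : seq V) (x y : V) (i j : nat) :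
  acyclic e ->
  ((s = s1 /\ t = t1) \/ (s = s2 /\ t = t2)) ->
  shortest_path e w s t P ->
  is_component (Ecap e w s1 t1 s2 t2) B ->
  B x -> B y ->
  (i <= j)%N -> (j < size P)%N -> nth x P i = x -> nth x P j = y ->
  (forall k, (i <= k <= j)%N -> B (nth x P k)) /\
  (forall k, (i <= k < j)%N -> Ecap e w s1 t1 s2 t2 (nth x P k, nth x P k.+1)).
Proof.
move=> acyc st sP compB Bx By; rewrite leq_eqVlt => /orP [/eqP <- | lt_ij] lt_jP Pi Pj.
  by split=> k le_k; [rewrite (_ : k = i) ?Pi //; lia | exfalso; lia].
have [A [M [C [eq_P sizeA sizeM]]]] := nth_split2 x lt_ij lt_jP.
rewrite Pi Pj in eq_P; subst P.
have F_S : forall uv, uv \in pedges (x :: rcons M y) -> Ecap e w s1 t1 s2 t2 uv.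
  case: st => [[-> ->] | [-> ->]] in sP.
  - by apply: (shortest_segment_in_F (sb := s2) (tb := t2) _ acyc sP compB Bx By).
  - apply: (shortest_segment_in_F (sb := s1) (tb := t1) _ acyc sP compB Bx By) => uv.
    by rewrite /Ecap; tauto.
have nth_S k : (i <= k <= j)%N ->
    nth x (A ++ x :: M ++ y :: C) k = nth x (x :: rcons M y) (k - i).
  move=> le_ikj; rewrite -[M ++ _]cat_rcons -cat_cons nth_cat sizeA ifN; last lia.
  by rewrite nth_cat ifT //= size_rcons; lia.
split=> k le_ikj.
- rewrite nth_S //; apply: (component_path_closed compB Bx F_S).
  by rewrite mem_nth //= size_rcons; lia.
- rewrite !nth_S ?subSn; try lia; apply: F_S; apply: pedges_nth; rewrite /= size_rcons; lia.
Qed.
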